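(* Assume that for Lebesgue-almost every irrational $\alpha\in(0,1)$ and every $c\in(0,1]$ one has $F_+^\alpha(c)=F_-^\alpha(c)$. Then for almost every $\alpha$, the function $c\mapsto F^\alpha(c):=\lim_{n\to\infty}S(\alpha,n,cn)^{1/cn}$ is continuous on $(0,1]$.
   Context: Every irrational $\alpha\in(0,1)$ has a unique continued fraction expansion $\alpha = 1/(a_1(\alpha)+1/(a_2(\alpha)+\cdots))$ with digits $a_i(\alpha)\in\mathbb{N}_{\ge1}$. For $1\le k\le n$ integers, \[ S(\alpha,n,k) := \binom{n}{k}^{-1}\sum_{1\le i_1<\cdots<i_k\le n} a_{i_1}(\alpha)\cdots a_{i_k}(\alpha), \] and $S(\alpha,n,cn)^{1/cn}$ means $S(\alpha,n,\lceil cn\rceil)^{1/\lceil cn\rceil}$. Define $F_+^\alpha(c)=\limsup_{n\to\infty}S(\alpha,n,cn)^{1/cn}$ and $F_-^\alpha(c)=\liminf_{n\to\infty}S(\alpha,n,cn)^{1/cn}$. *)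

From HB Require Import structures.
From mathcomp Require Import all_boot all_order all_algebra.
From mathcomp Require Import all_classical all_reals all_analysis.
Set Implicit Arguments. Unset Strict Implicit. Unset Printing Implicit Defensive.
Import Order.TTheory GRing.Theory Num.Theory.
Import numFieldNormedType.Exports.
Local Open Scope ring_scope.
Local Open Scope classical_set_scope.

Section CF.
Variable R : realType.

Definition gauss (x : R) : R := x^-1 - (Num.floor (x^-1))%:~R.

Definition cf_digit (x : R) (i : nat) : R :=
  (Num.floor ((iter i.-1 gauss x)^-1))%:~R.

Definition S_sym (alpha : R) (n k : nat) : R :=
  ('C(n, k)%:R)^-1 *
  \sum_(A : {set 'I_n} | #|A| == k) \prod_(i in A) cf_digit alpha (val i).+1.

Definition kceil (c : R) (n : nat) : nat := `|Num.ceil (c * n%:R)|%N.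

(* the sequence n |-> S(alpha, n, cn)^{1/cn} = S(alpha,n,ceil(cn))^{1/ceil(cn)} *)
Definition Sseq (alpha c : R) (n : nat) : R :=
  S_sym alpha n (kceil c n) `^ ((kceil c n)%:R)^-1.

Definition Fplus (alpha c : R) : \bar R := limn_esup (fun n => (Sseq alpha c n)%:E).
Definition Fminus (alpha c : R) : \bar R := limn_einf (fun n => (Sseq alpha c n)%:E).

Definition Flim (alpha c : R) : \bar R := lim ((fun n => (Sseq alpha c n)%:E) @ \oo).


End CF.

From HB Require Import structures.
From mathcomp Require Import all_boot all_order all_algebra.
From mathcomp Require Import all_classical all_reals all_analysis.
From mathcomp Require Import ring lra.
Set Implicit Arguments.
Unset Strict Implicit.
Unset Printing Implicit Defensive.
Import Order.TTheory GRing.Theory Num.Theory.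
Import numFieldNormedType.Exports.
Local Open Scope ring_scope.
Local Open Scope classical_set_scope.

(* [S(alpha, n, k)] is the k-th normalised elementary symmetric mean [E_k] of the
   digits [a_1, ..., a_n], which are all >= 1.  Newton's inequalities
   [E_(k-1) E_(k+1) <= E_k^2] give Maclaurin's inequalities: [k |-> E_k^(1/k)] is
   nonincreasing; and since the digits are >= 1, [k |-> E_k] is nondecreasing.
   With [k = ceil(c n)] and [n -> oo], [F(c)] is therefore nonincreasing in [c]
   while [c |-> F(c)^c] is nondecreasing on (0, 1].  Two such opposite
   monotonicities leave no room for a jump, so [F] is continuous there (or
   identically [+oo]). *)

Section ContinuedFractionDigits.
Variable R : realType.

Lemma irrationalV (x : R) : irrational x -> irrational x^-1.
Proof.
move=> hx [q _ hq]; apply: hx; exists q^-1 => //.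
by rewrite fmorphV /= hq invrK.
Qed.

Lemma irrationalBz (x : R) (z : int) : irrational x -> irrational (x - z%:~R).
Proof.
move=> hx [q _ hq]; apply: hx; exists (q + z%:~R) => //.
by rewrite rmorphD /= hq ratr_int subrK.
Qed.

Lemma irrational_neq0 (x : R) : irrational x -> x != 0.
Proof. by move=> hx; apply/eqP => x0; apply: hx; exists 0 => //; rewrite rmorph0. Qed.

Lemma gauss_unit_irrational (x : R) : 0 < x < 1 -> irrational x ->
  0 < gauss x < 1 /\ irrational (gauss x).
Proof.
move=> /andP[x0 x1] hx; have hg : irrational (gauss x) by exact/irrationalBz/irrationalV.
split => //; apply/andP; split.
  by rewrite lt_neqAle eq_sym irrational_neq0 //= subr_ge0 floor_le.
by rewrite /gauss ltrBlDl addrC -[1 + _]/(1%:~R + _) -intrD addrC floorD1_gt.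
Qed.

Lemma iter_gauss_unit_irrational n (x : R) : 0 < x < 1 -> irrational x ->
  0 < iter n (@gauss R) x < 1 /\ irrational (iter n (@gauss R) x).
Proof. by move=> x01 hx; elim: n => [|n [? ?]] //=; exact: gauss_unit_irrational. Qed.

Lemma cf_digit_ge1 (x : R) i : 0 < x < 1 -> irrational x -> 1 <= cf_digit x i.
Proof.
move=> x01 hx; have [/andP[y0 y1] _] := iter_gauss_unit_irrational i.-1 x01 hx.
rewrite /cf_digit -[1]/(1%:~R) ler_int floor_ge_int /=.
by rewrite invf_ge1 // ltW.
Qed.

End ContinuedFractionDigits.

Section NewtonAlgebra.
Variable R : realFieldType.

Lemma log_concave_shift (a b c d : R) : 0 <= a -> 0 < b -> 0 < c -> 0 <= d ->
  a * c <= b ^+ 2 -> b * d <= c ^+ 2 -> a * d <= b * c.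
Proof.
move=> a0 b0 c0 d0 abc bcd; have bc0 : 0 < b * c by rewrite mulr_gt0.
rewrite -(ler_pM2r bc0); apply: le_trans (_ : b ^+ 2 * c ^+ 2 <= _); last first.
  by rewrite -exprMn expr2.
have -> : a * d * (b * c) = (a * c) * (b * d) by ring.
by apply: ler_pM => //; rewrite mulr_ge0 // ltW.
Qed.

(* The induction step of Newton's inequalities: [U0 .. U3] are the means of [N]
   variables at [k - 1 .. k + 2], [V0 .. V2] those of [N + 1] variables at
   [k .. k + 2], related by the recurrence [elem_sym_mean_recS] below. *)
Lemma newton_step (N k x U0 U1 U2 U3 V0 V1 V2 : R) :
  0 <= k -> k + 1 <= N -> 0 <= x ->
  U1 * U3 <= U2 ^+ 2 -> k * (U0 * U2) <= k * U1 ^+ 2 ->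
  k * (U0 * U3) <= k * (U1 * U2) ->
  (N + 1) * V0 = (N + 1 - k) * U1 + k * x * U0 ->
  (N + 1) * V1 = (N - k) * U2 + (k + 1) * x * U1 ->
  (N + 1) * V2 = (N - 1 - k) * U3 + (k + 2) * x * U2 ->
  V0 * V2 <= V1 ^+ 2.
Proof.
move=> k0 kN x0 h1 h2 h3 e0 e1 e2.
have N1 : 0 < (N + 1) ^+ 2 by rewrite exprn_gt0 //; lra.
rewrite -(ler_pM2l N1).
have -> : (N + 1) ^+ 2 * (V0 * V2) = ((N + 1) * V0) * ((N + 1) * V2) by ring.
rewrite -exprMn e0 e1 e2.
have t1 : (N + 1 - k) * (N - 1 - k) * (U1 * U3) <= (N + 1 - k) * (N - 1 - k) * U2 ^+ 2.
  by apply: ler_wpM2l => //; apply: mulr_ge0; lra.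
have t2 : (k + 2) * x ^+ 2 * (k * (U0 * U2)) <= (k + 2) * x ^+ 2 * (k * U1 ^+ 2).
  by apply: ler_wpM2l => //; apply: mulr_ge0; [lra | exact: sqr_ge0].
have t3 : (N - 1 - k) * x * (k * (U0 * U3)) <= (N - 1 - k) * x * (k * (U1 * U2)).
  by apply: ler_wpM2l => //; apply: mulr_ge0; lra.
have t4 : 0 <= (U2 - x * U1) ^+ 2 by exact: sqr_ge0.
nra.
Qed.

End NewtonAlgebra.

Section SymmetricMeans.
Variables (R : realFieldType) (x : nat -> R).

Definition elem_sym_poly n : {poly R} := \prod_(i < n) (1 + (x i)%:P * 'X).
Definition elem_sym n k := (elem_sym_poly n)`_k.

Lemma elem_sym_sum n k :
  \sum_(A : {set 'I_n} | #|A| == k) \prod_(i in A) x (val i) = elem_sym n k.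
Proof.
rewrite /elem_sym /elem_sym_poly.
rewrite (_ : \prod_(i < n) _ = \prod_(i < n) ((x i)%:P * 'X + 1)); last first.
  by apply: eq_bigr => i _; rewrite addrC.
rewrite bigA_distr /= coef_sum.
transitivity (\sum_(J in {set 'I_n}) if #|J| == k then \prod_(i in J) x (val i) else 0).
  by rewrite big_mkcond.
apply: eq_bigr => J _.
rewrite -big_mkcond /= big_split /= -rmorph_prod /= prodr_const coefCM coefXn eq_sym.
by case: eqP; rewrite ?mulr1 ?mulr0.
Qed.

Lemma elem_sym0n k : elem_sym 0 k = (k == 0)%:R.
Proof. by rewrite /elem_sym /elem_sym_poly big_ord0 coef1. Qed.

Lemma elem_symS n k :
  elem_sym n.+1 k = elem_sym n k + (if k is k'.+1 then x n * elem_sym n k' else 0).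
Proof.
rewrite /elem_sym /elem_sym_poly big_ord_recr /= mulrDr mulr1 coefD; congr (_ + _).
by rewrite mulrA (mulrC _ (x n)%:P) coefMX; case: k => [|k] //=; rewrite coefCM.
Qed.

Lemma elem_symn0 n : elem_sym n 0 = 1.
Proof. by elim: n => [|n IH]; rewrite ?elem_sym0n // elem_symS IH addr0. Qed.

(* The symmetric mean [elem_sym n k / 'C(n, k)], defined through the recurrence that
   [elem_symS] and Pascal's rule give for it (see [elem_symE]). *)
Fixpoint elem_sym_mean n k : R :=
  match n, k with
  | 0, _ => (k == 0)%:R
  | _.+1, 0 => 1
  | n.+1, k.+1 =>
      ((n - k)%N%:R * elem_sym_mean n k.+1 + k.+1%:R * x n * elem_sym_mean n k)
        / n.+1%:R
  end.

Lemma elem_sym_mean_n0 n : elem_sym_mean n 0 = 1.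
Proof. by case: n. Qed.

Lemma elem_symE n k : elem_sym n k = 'C(n, k)%:R * elem_sym_mean n k.
Proof.
elim: n k => [|n IH] k.
  by rewrite elem_sym0n bin0n /=; case: (k == 0); rewrite ?mulr1 ?mulr0.
case: k => [|k]; first by rewrite elem_symn0 elem_sym_mean_n0 bin0 mulr1.
have n1 : n.+1%:R != 0 :> R by rewrite pnatr_eq0.
have binS : 'C(n, k.+1)%:R = 'C(n.+1, k.+1)%:R * (n - k)%N%:R / n.+1%:R :> R.
  apply: (mulIf n1); rewrite mulfVK // -!natrM; congr (_%:R).
  by rewrite mulnC (mul_bin_down n.+1 k.+1) subSS mulnC.
have binP : 'C(n, k)%:R = 'C(n.+1, k.+1)%:R * k.+1%:R / n.+1%:R :> R.
  apply: (mulIf n1); rewrite mulfVK // -!natrM; congr (_%:R).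
  by rewrite mulnC (mul_bin_diag n.+1 k) mulnC.
by rewrite elem_symS /= !IH binS binP; field; rewrite addrC natr1.
Qed.

Lemma elem_sym_mean_eq0 n k : (n < k)%N -> elem_sym_mean n k = 0.
Proof.
elim: n k => [|n IH] [|k] //= nk.
by rewrite !IH ?mulr0 ?addr0 ?mul0r // ltnW.
Qed.

Lemma elem_sym_mean_recS n k : (k <= n.+1)%N ->
  n.+1%:R * elem_sym_mean n.+1 k =
  (n.+1%:R - k%:R) * elem_sym_mean n k + k%:R * x n * elem_sym_mean n k.-1.
Proof.
case: k => [_|k]; first by rewrite !elem_sym_mean_n0 subr0 !mul0r addr0.
rewrite ltnS => kn /=; rewrite mulrC divfK ?pnatr_eq0 //.
by rewrite natrB // -!natr1 opprD addrACA subrr addr0.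
Qed.

Hypothesis x_ge1 : forall i, 1 <= x i.

Lemma elem_sym_mean_ge1 n k : (k <= n)%N -> 1 <= elem_sym_mean n k.
Proof.
elim: n k => [|n IH] [|k] //=; rewrite ?elem_sym_mean_n0 // ltnS => kn.
rewrite ler_pdivlMr ?ltr0n // mul1r.
have -> : n.+1%:R = (n - k)%N%:R + k.+1%:R :> R by rewrite -natrD addnS subnK.
have h1 : (n - k)%N%:R <= (n - k)%N%:R * elem_sym_mean n k.+1 :> R.
  have [kn'|] := ltnP k n; first by rewrite ler_peMr ?ler0n ?IH.
  by rewrite -subn_eq0 => /eqP ->; rewrite mul0r.
have h2 : k.+1%:R <= k.+1%:R * x n * elem_sym_mean n k :> R.
  rewrite -mulrA ler_peMr ?ler0n // -[1]mulr1.
  by apply: ler_pM => //; rewrite ?IH.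
by rewrite lerD.
Qed.

Lemma elem_sym_mean_ge0 n k : 0 <= elem_sym_mean n k.
Proof.
have [kn|nk] := leqP k n; last by rewrite elem_sym_mean_eq0.
by rewrite (le_trans _ (elem_sym_mean_ge1 kn)).
Qed.

Lemma elem_sym_mean_gt0 n k : (k <= n)%N -> 0 < elem_sym_mean n k.
Proof. by move=> kn; rewrite (lt_le_trans _ (elem_sym_mean_ge1 kn)) ?ltr01. Qed.

Lemma elem_sym_mean_leS n k : (k < n)%N -> elem_sym_mean n k <= elem_sym_mean n k.+1.
Proof.
elim: n k => [|n IH] k //; rewrite ltnS => kn.
rewrite -(ler_pM2l (ltr0Sn _ n)) elem_sym_mean_recS ?(leq_trans kn) //.
rewrite elem_sym_mean_recS ?ltnS //.
have h1 : (n%:R - k%:R) * elem_sym_mean n k <= (n%:R - k%:R) * elem_sym_mean n k.+1.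
  have [kn'|] := ltnP k n; first by rewrite ler_wpM2l ?subr_ge0 ?ler_nat ?IH // ltnW.
  by move=> nk; rewrite (@anti_leq k n) ?kn ?nk // subrr !mul0r.
have h2 : k%:R * x n * elem_sym_mean n k.-1 <= k%:R * x n * elem_sym_mean n k.
  case: k kn {h1} => [|k] kn; first by rewrite !mul0r.
  by rewrite ler_wpM2l ?mulr_ge0 ?ler0n ?(le_trans ler01) ?IH.
have h3 : elem_sym_mean n k <= x n * elem_sym_mean n k.
  by rewrite ler_peMl ?elem_sym_mean_ge0.
rewrite -!natr1; nra.
Qed.

Lemma elem_sym_mean_le n j k : (j <= k)%N -> (k <= n)%N ->
  elem_sym_mean n j <= elem_sym_mean n k.
Proof.
elim: k => [|k IH]; first by rewrite leqn0 => /eqP ->.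
rewrite leq_eqVlt ltnS => /predU1P[-> //|jk] kn.
exact: le_trans (IH jk (ltnW kn)) (elem_sym_mean_leS kn).
Qed.

Lemma elem_sym_mean_newton n k : (0 < k)%N ->
  elem_sym_mean n k.-1 * elem_sym_mean n k.+1 <= elem_sym_mean n k ^+ 2.
Proof.
elim: n k => [|n IH] k k0.
  by rewrite (@elem_sym_mean_eq0 0 k.+1) // mulr0 sqr_ge0.
have [nk|kn] := ltnP n k.
  by rewrite (@elem_sym_mean_eq0 n.+1 k.+1) // mulr0 sqr_ge0.
case: k k0 kn => [//|k] _ kn.
have concave_k : k%:R * (elem_sym_mean n k.-1 * elem_sym_mean n k.+1)
    <= k%:R * elem_sym_mean n k ^+ 2 :> R.
  by case: k {kn} => [|k]; rewrite ?mul0r // ler_wpM2l // IH.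
have shift_k : k%:R * (elem_sym_mean n k.-1 * elem_sym_mean n k.+2)
    <= k%:R * (elem_sym_mean n k * elem_sym_mean n k.+1) :> R.
  case: k kn {concave_k} => [|k] kn; rewrite ?mul0r // ler_wpM2l //.
  apply: log_concave_shift;
    rewrite ?elem_sym_mean_ge0 ?elem_sym_mean_gt0 ?(ltnW kn) //.
    exact: (IH k.+1).
  exact: (IH k.+2).
apply: (newton_step (N := n%:R) (k := k%:R) (x := x n) _ _ _ _ concave_k shift_k).
- exact: ler0n.
- by rewrite natr1 ler_nat.
- by rewrite (le_trans _ (x_ge1 n)).
- exact: (IH k.+1).
- rewrite natr1 elem_sym_mean_recS /=; last exact: leqW (ltnW kn).
  by rewrite -!natr1; ring.
- rewrite natr1 elem_sym_mean_recS /=; last exact: ltnW kn.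
  by rewrite -!natr1; ring.
- rewrite natr1 elem_sym_mean_recS /=; last exact: kn.
  by rewrite -!natr1; ring.
Qed.

Lemma elem_sym_mean_maclaurinS n k : (0 < k)%N ->
  elem_sym_mean n k.+1 ^+ k <= elem_sym_mean n k ^+ k.+1.
Proof.
elim: k => [//|k IH] _; case: k IH => [_|k IH].
  by have := @elem_sym_mean_newton n 1 isT; rewrite /= elem_sym_mean_n0 mul1r expr1.
have [nk|kn] := ltnP n k.+3.
  by rewrite elem_sym_mean_eq0 // expr0n /= exprn_ge0 // elem_sym_mean_ge0.
have Ek2 : 0 < elem_sym_mean n k.+2 ^+ k.+1.
  by rewrite exprn_gt0 // elem_sym_mean_gt0 // ltnW.
have newton : (elem_sym_mean n k.+1 * elem_sym_mean n k.+3) ^+ k.+2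
    <= (elem_sym_mean n k.+2 ^+ 2) ^+ k.+2.
  rewrite lerXn2r ?nnegrE ?mulr_ge0 ?exprn_ge0 ?elem_sym_mean_ge0 //.
  exact: (@elem_sym_mean_newton n k.+2).
rewrite -(ler_pM2l Ek2).
apply: le_trans (_ : elem_sym_mean n k.+1 ^+ k.+2 * elem_sym_mean n k.+3 ^+ k.+2 <= _).
  by rewrite ler_wpM2r ?exprn_ge0 ?elem_sym_mean_ge0 ?IH.
move: newton; rewrite exprMn -exprM -exprD.
by rewrite (_ : (k.+1 + k.+3 = 2 * k.+2)%N) // mul2n -addnn !addSn !addnS.
Qed.

Lemma elem_sym_mean_maclaurin n j k : (0 < j)%N -> (j <= k)%N ->
  elem_sym_mean n k ^+ j <= elem_sym_mean n j ^+ k.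
Proof.
move=> j0; elim: k => [|k IH]; first by rewrite leqn0 => /eqP j0'; rewrite j0' in j0.
rewrite leq_eqVlt ltnS => /predU1P[-> //|jk].
have k0 : (0 < k)%N := leq_trans j0 jk.
have swap (y : R) a b : (y ^+ a) ^+ b = (y ^+ b) ^+ a by rewrite -!exprM mulnC.
rewrite -(ler_pXn2r k0) ?nnegrE ?exprn_ge0 ?elem_sym_mean_ge0 // swap.
apply: le_trans (_ : (elem_sym_mean n k ^+ k.+1) ^+ j <= _).
  by rewrite lerXn2r ?nnegrE ?exprn_ge0 ?elem_sym_mean_ge0 ?elem_sym_mean_maclaurinS.
rewrite swap (swap (elem_sym_mean n j)).
by rewrite lerXn2r ?nnegrE ?exprn_ge0 ?elem_sym_mean_ge0 ?IH.
Qed.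

End SymmetricMeans.

Lemma cvg_limn_esup (R : realType) (u : (\bar R)^nat) :
  limn_einf u = limn_esup u -> u @ \oo --> limn_esup u.
Proof.
move=> einf_esup; apply: (@squeeze_cvge _ _ _ _ (einfs u) u (esups u)).
- apply: nearW => n; apply/andP; split.
    by apply: ereal_inf_lbound; exists n => /=.
  by apply: ereal_sup_ubound; exists n => /=.
- by rewrite -einf_esup limn_einf_lim; exact: is_cvg_einfs.
- by rewrite limn_esup_lim; exact: is_cvg_esups.
Qed.

(* [k] and [k'] stand for the ceilings of [c N] and [c' N]; the slack
   [2 / (c (N + 1))] dominates the error term [1 / (c N)]. *)
Lemma le_ceil_ratio (R : realFieldType) (a b k k' c c' N : R) :
  0 < c -> 1 <= N -> 0 <= a -> 0 <= b ->
  c * N <= k -> k' <= c' * N + 1 -> k * a <= k' * b ->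
  a <= (c' / c + 2 / c * (N + 1)^-1) * b.
Proof.
move=> c0 N1 a0 b0 ck kc' kab.
have acN : a * (c * N) <= (c' * N + 1) * b by nra.
have d0 : 0 < c * N * (N + 1) by rewrite !mulr_gt0 //; lra.
have -> : c' / c + 2 / c * (N + 1)^-1 = (c' * N * (N + 1) + 2 * N) / (c * N * (N + 1)).
  by field; apply/and3P; split; lra.
rewrite mulrAC ler_pdivlMr //.
have : a * (c * N) * (N + 1) <= (c' * N + 1) * b * (N + 1) by rewrite ler_wpM2r //; lra.
nra.
Qed.

(* From [t] to [x > t], [g] may only decrease, while [c g(c)] keeps the drop
   within the factor [t / x]: no jump is possible. *)
Lemma cvg_within_antitone_mul_monotone (R : realFieldType) (g : R -> R) (x : R) :
  0 < x <= 1 -> (forall c, 0 < c <= 1 -> 0 <= g c) ->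
  (forall c c', 0 < c -> c <= c' -> c' <= 1 -> g c' <= g c) ->
  (forall c c', 0 < c -> c <= c' -> c' <= 1 -> c * g c <= c' * g c') ->
  g @ within `]0, 1] (nbhs x) --> g x.
Proof.
move=> /andP[x0 x1] g0 g_anti mulg_mono; apply/cvgrPdist_lt => e e0.
have gx0 : 0 <= g x by apply: g0; rewrite x0 x1.
set G := g x in gx0 *.
have d0 : 0 < e * x / (2 * G + 2) by rewrite divr_gt0 ?mulr_gt0 //; lra.
rewrite near_withinE; apply/nbhs_ballP.
exists (Num.min (x / 2) (e * x / (2 * G + 2))); first by rewrite /= lt_min d0 andbT; lra.
move=> t; rewrite /ball /= lt_min => /andP[tx2 txe]; rewrite in_itv /= => /andP[t0 t1].
have txe' : `|x - t| * (2 * G + 2) < e * x by rewrite -ltr_pdivlMr //; lra.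
have := normr_ge0 (x - t) => tx0.
suff : `|G - g t| * x <= 2 * `|x - t| * G by rewrite -(ltr_pM2r x0); nra.
case: (ltgtP t x) => tx.
- have h1 := g_anti _ _ t0 (ltW tx) x1; have h2 := mulg_mono _ _ t0 (ltW tx) x1.
  rewrite -/G in h1 h2.
  rewrite [`|G - g t|]ler0_norm ?subr_le0 // [`|x - t|]ger0_norm ?subr_ge0 ?(ltW tx) //.
  have x2t : x <= 2 * t by move: tx2; rewrite ger0_norm ?subr_ge0 ?(ltW tx) //; lra.
  have : 0 <= (g t - G) * (2 * t - x) by apply: mulr_ge0; lra.
  nra.
- have h1 := g_anti _ _ x0 (ltW tx) t1; have h2 := mulg_mono _ _ x0 (ltW tx) t1.
  rewrite -/G in h1 h2.
  rewrite [`|G - g t|]ger0_norm ?subr_ge0 // [`|x - t|]ler0_norm ?subr_le0 ?(ltW tx) //.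
  nra.
- by rewrite tx /G subrr normr0 mul0r !mulr_ge0.
Qed.

Section Kceil.
Variable R : realType.
Implicit Types (c : R) (n : nat).

Lemma kceilE c n : 0 <= c -> (kceil c n)%:R = (Num.ceil (c * n%:R))%:~R :> R.
Proof.
move=> c0; rewrite /kceil natr_absz ger0_norm // ceil_ge0.
by rewrite (lt_le_trans (ltrN10 R)) ?mulr_ge0.
Qed.

Lemma kceil_ge c n : 0 <= c -> c * n%:R <= (kceil c n)%:R.
Proof. by move=> c0; rewrite kceilE // ceil_ge. Qed.

Lemma kceil_ltD1 c n : 0 <= c -> (kceil c n)%:R < c * n%:R + 1.
Proof. by move=> c0; rewrite kceilE //; have := ceilB1_lt (c * n%:R); rewrite intrD; lra. Qed.

Lemma kceil_le_n c n : 0 <= c <= 1 -> (kceil c n <= n)%N.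
Proof.
move=> /andP[c0 c1]; rewrite -ltnS -(ltr_nat R).
by apply: lt_le_trans (kceil_ltD1 n c0) _; rewrite -natr1 lerD2r ler_piMl.
Qed.

Lemma kceil_gt0 c n : 0 < c -> (0 < n)%N -> (0 < kceil c n)%N.
Proof.
move=> c0 n0; rewrite -(ltr_nat R).
by apply: lt_le_trans (kceil_ge n (ltW c0)); rewrite mulr_gt0 ?ltr0n.
Qed.

Lemma le_kceil c (c' : R) n : 0 <= c -> c <= c' -> (kceil c n <= kceil c' n)%N.
Proof.
move=> c0 cc'; rewrite -(ler_nat R) !kceilE ?(le_trans c0) // ler_int.
by rewrite le_ceil // ler_wpM2r.
Qed.

End Kceil.

Section FixedAlpha.
Variables (R : realType) (alpha : R).
Hypotheses (alpha01 : 0 < alpha < 1) (alpha_irr : irrational alpha).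

(* The symmetric means index their variables from 0, the digits from 1. *)
Let a (i : nat) : R := cf_digit alpha i.+1.
Let a_ge1 i : 1 <= a i := cf_digit_ge1 i.+1 alpha01 alpha_irr.

Lemma S_symE n k : (k <= n)%N -> S_sym alpha n k = elem_sym_mean a n k.
Proof.
move=> kn; rewrite /S_sym (elem_sym_sum a) elem_symE mulKf //.
by rewrite pnatr_eq0 -lt0n bin_gt0.
Qed.

Lemma ln_SseqE c n : 0 < c <= 1 ->
  ln (Sseq alpha c n) = ln (elem_sym_mean a n (kceil c n)) / (kceil c n)%:R.
Proof.
move=> /andP[c0 c1]; rewrite /Sseq S_symE ?ln_powR 1?mulrC //.
by rewrite kceil_le_n // ltW.
Qed.

Lemma Sseq_ge1 c n : 0 < c <= 1 -> 1 <= Sseq alpha c n.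
Proof.
move=> /andP[c0 c1]; have Kn : (kceil c n <= n)%N by rewrite kceil_le_n // ltW.
rewrite /Sseq S_symE // -[X in X <= _](powRr0 (elem_sym_mean a n (kceil c n))).
by apply: ler_powR; rewrite ?(elem_sym_mean_ge1 a_ge1 Kn) ?invr_ge0 ?ler0n.
Qed.

Lemma Sseq_gt0 c n : 0 < c <= 1 -> 0 < Sseq alpha c n.
Proof. by move=> c01; rewrite (lt_le_trans _ (Sseq_ge1 n c01)). Qed.

Lemma Sseq_antitone c c' n : 0 < c -> c <= c' -> c' <= 1 -> (0 < n)%N ->
  Sseq alpha c' n <= Sseq alpha c n.
Proof.
move=> c0 cc' c'1 n0; have c'0 := lt_le_trans c0 cc'.
have c01 : 0 < c <= 1 by rewrite c0 (le_trans cc').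
have c'01 : 0 < c' <= 1 by rewrite c'0.
have K0 := kceil_gt0 c0 n0; have KK' := le_kceil n (ltW c0) cc'.
have K'n : (kceil c' n <= n)%N by rewrite kceil_le_n // ltW.
have E0 := elem_sym_mean_gt0 a_ge1 (leq_trans KK' K'n).
have E'0 := elem_sym_mean_gt0 a_ge1 K'n.
have K'0 := leq_trans K0 KK'.
rewrite -ler_ln ?posrE ?Sseq_gt0 // !ln_SseqE //.
rewrite ler_pdivrMr ?ltr0n // mulrAC ler_pdivlMr ?ltr0n //.
have maclaurin := elem_sym_mean_maclaurin a_ge1 n K0 KK'.
rewrite -ler_ln ?posrE ?exprn_gt0 // !lnXn // in maclaurin.
by rewrite !mulr_natr.
Qed.

Lemma ln_Sseq_le_scaled c c' n : 0 < c -> c <= c' -> c' <= 1 -> (0 < n)%N ->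
  ln (Sseq alpha c n) <= (c' / c + 2 / c * harmonic n) * ln (Sseq alpha c' n).
Proof.
move=> c0 cc' c'1 n0; have c'0 := lt_le_trans c0 cc'.
have c01 : 0 < c <= 1 by rewrite c0 (le_trans cc').
have c'01 : 0 < c' <= 1 by rewrite c'0.
have K0 := kceil_gt0 c0 n0; have KK' := le_kceil n (ltW c0) cc'.
have K'n : (kceil c' n <= n)%N by rewrite kceil_le_n // ltW.
have K'0 := leq_trans K0 KK'.
have E0 := elem_sym_mean_gt0 a_ge1 (leq_trans KK' K'n).
have E'0 := elem_sym_mean_gt0 a_ge1 K'n.
have -> : harmonic n = (n%:R + 1)^-1 :> R by rewrite /harmonic /= natr1.
apply: (le_ceil_ratio (k := (kceil c n)%:R) (k' := (kceil c' n)%:R)) => //.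
- by rewrite ler1n.
- by rewrite ln_ge0 ?Sseq_ge1.
- by rewrite ln_ge0 ?Sseq_ge1.
- exact: kceil_ge (ltW c0).
- exact/ltW/kceil_ltD1/ltW.
rewrite !ln_SseqE // ![_%:R * (_ / _)]mulrC !divfK ?pnatr_eq0 -?lt0n //.
by rewrite ler_ln ?posrE // elem_sym_mean_le.
Qed.

Hypothesis Fplus_eq_Fminus : forall c, 0 < c <= 1 -> Fplus alpha c = Fminus alpha c.

Lemma Flim_cvg c : 0 < c <= 1 -> (fun n => (Sseq alpha c n)%:E) @ \oo --> Flim alpha c.
Proof.
move=> c01; have := cvg_limn_esup (esym (Fplus_eq_Fminus c01)).
by move=> cvg_esup; rewrite /Flim (cvg_lim _ cvg_esup).
Qed.

Lemma Flim_ge1 c : 0 < c <= 1 -> (1%:E <= Flim alpha c)%E.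
Proof.
move=> c01; apply: lime_ge; first exact: cvgP (Flim_cvg c01).
by apply: nearW => n; rewrite lee_fin Sseq_ge1.
Qed.

Lemma Flim_antitone c c' : 0 < c -> c <= c' -> c' <= 1 ->
  (Flim alpha c' <= Flim alpha c)%E.
Proof.
move=> c0 cc' c'1.
have c01 : 0 < c <= 1 by rewrite c0 (le_trans cc').
have c'01 : 0 < c' <= 1 by rewrite (lt_le_trans c0 cc').
apply: lee_lim; [exact: cvgP (Flim_cvg c'01)|exact: cvgP (Flim_cvg c01)|].
by exists 1%N => // n /= n0; rewrite lee_fin Sseq_antitone.
Qed.

Lemma Flim_le_expR c c' r' : 0 < c -> c <= c' -> c' <= 1 -> Flim alpha c' = r'%:E ->
  (Flim alpha c <= (expR (c' / c * ln r'))%:E)%E.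
Proof.
move=> c0 cc' c'1 Fc'.
have c01 : 0 < c <= 1 by rewrite c0 (le_trans cc').
have c'01 : 0 < c' <= 1 by rewrite (lt_le_trans c0 cc').
have r'1 : 1 <= r' by rewrite -lee_fin -Fc' Flim_ge1.
have cvg_S : Sseq alpha c' n @[n --> \oo] --> r'.
  by have := Flim_cvg c'01; rewrite Fc' => /fine_cvgP[_ cvg_fine]; exact: cvg_fine.
have cvg_ln : ln (Sseq alpha c' n) @[n --> \oo] --> ln r'.
  exact: cvg_comp _ _ cvg_S (continuous_ln (lt_le_trans ltr01 r'1)).
have cvg_slack : (c' / c + 2 / c * harmonic n) @[n --> \oo] --> c' / c.
  rewrite -[X in _ --> X]addr0; apply: cvgD; first exact: cvg_cst.
  by rewrite -(mulr0 (2 / c)); apply: cvgM; [exact: cvg_cst|exact: cvg_harmonic].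
have cvg_exp : expR ((c' / c + 2 / c * harmonic n) * ln (Sseq alpha c' n))
    @[n --> \oo] --> expR (c' / c * ln r').
  have cvg_prod : ((c' / c + 2 / c * harmonic n) * ln (Sseq alpha c' n)) @[n --> \oo]
      --> c' / c * ln r' by exact: cvgM cvg_slack cvg_ln.
  by apply: (cvg_comp _ _ cvg_prod); exact: continuous_expR.
have cvg_bound : (expR ((c' / c + 2 / c * harmonic n) * ln (Sseq alpha c' n)))%:E
    @[n --> \oo] --> (expR (c' / c * ln r'))%:E.
  by apply/fine_cvgP; split; [exact: nearW|exact: cvg_exp].
rewrite -(cvg_lim _ cvg_bound) //.
apply: lee_lim; [exact: cvgP (Flim_cvg c01)|exact: cvgP cvg_bound|].
exists 1%N => // n /= n0; rewrite lee_fin -[Sseq alpha c n]lnK ?posrE ?Sseq_gt0 //.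
by rewrite ler_expR ln_Sseq_le_scaled.
Qed.

Lemma Flim_mul_ln_le c c' r r' : 0 < c -> c <= c' -> c' <= 1 ->
  Flim alpha c = r%:E -> Flim alpha c' = r'%:E -> c * ln r <= c' * ln r'.
Proof.
move=> c0 cc' c'1 Fc Fc'; have := Flim_le_expR c0 cc' c'1 Fc'.
have r1 : 1 <= r by rewrite -lee_fin -Fc Flim_ge1 // c0 (le_trans cc').
rewrite Fc lee_fin -ler_ln ?posrE ?expR_gt0 ?(lt_le_trans ltr01) // expRK.
by rewrite mulrAC ler_pdivlMr // mulrC.
Qed.

Lemma Flim_continuous_fin r1 : Flim alpha 1 = r1%:E ->
  {within `]0, 1], continuous (Flim alpha)}.
Proof.
move=> F1; pose f c := fine (Flim alpha c).
have Ff c : 0 < c <= 1 -> Flim alpha c = (f c)%:E.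
  move=> c01; have /andP[c0 c1] := c01; rewrite /f.
  by case: (Flim alpha c) (Flim_ge1 c01) (Flim_le_expR c0 c1 (lexx 1) F1).
have f_gt0 c : 0 < c <= 1 -> 0 < f c.
  by move=> c01; rewrite (lt_le_trans ltr01) // -lee_fin -Ff ?Flim_ge1.
have lnf_ge0 t : 0 < t <= 1 -> 0 <= ln (f t).
  by move=> t01; rewrite ln_ge0 // -lee_fin -Ff ?Flim_ge1.
have lnf_antitone t t' : 0 < t -> t <= t' -> t' <= 1 -> ln (f t') <= ln (f t).
  move=> t0 tt' t'1; have t01 : 0 < t <= 1 by rewrite t0 (le_trans tt').
  have t'01 : 0 < t' <= 1 by rewrite (lt_le_trans t0 tt').
  by rewrite ler_ln ?posrE ?f_gt0 // -lee_fin -!Ff // Flim_antitone.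
have mul_lnf_monotone t t' : 0 < t -> t <= t' -> t' <= 1 ->
    t * ln (f t) <= t' * ln (f t').
  move=> t0 tt' t'1; apply: Flim_mul_ln_le => //; rewrite Ff //.
    by rewrite t0 (le_trans tt').
  by rewrite (lt_le_trans t0 tt').
apply: (subspace_eq_continuous (f := fun c => (expR (ln (f c)))%:E)).
  move=> c; rewrite inE /= in_itv /= => c01.
  by rewrite lnK ?posrE ?f_gt0 // /from_subspace Ff.
apply/subspace_continuousP => c; rewrite /= in_itv /= => c01.
apply/fine_cvgP; split; first exact: nearW.
apply: (cvg_comp _ _ (cvg_within_antitone_mul_monotone c01 lnf_ge0 lnf_antitone
  mul_lnf_monotone)).
exact: continuous_expR.
Qed.

Lemma Flim_continuous : {within `]0, 1], continuous (Flim alpha)}.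
Proof.
have : (1%:E <= Flim alpha 1)%E by rewrite Flim_ge1 // ltr01 lexx.
case F1: (Flim alpha 1) => [r1| |] // _; first exact: Flim_continuous_fin F1.
apply: (subspace_eq_continuous (f := fun _ => +oo%E)); last exact: cst_continuous.
move=> c; rewrite inE /= in_itv /= => /andP[c0 c1].
have := Flim_antitone c0 c1 (lexx 1).
by rewrite F1 leye_eq => /eqP Fc; rewrite /from_subspace Fc.
Qed.

End FixedAlpha.

Theorem proposition3p5 (R : realType) :
  {ae (@lebesgue_measure R), forall alpha : R,
      0 < alpha < 1 -> (@irrational R) alpha ->
      forall c : R, 0 < c <= 1 -> Fplus alpha c = Fminus alpha c} ->
  {ae (@lebesgue_measure R), forall alpha : R,
      0 < alpha < 1 -> (@irrational R) alpha ->
      {within `]0, 1], continuous (Flim alpha)}}.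
Proof.
move=> ae_eq; apply: filterS ae_eq.
  exact: (ae_filter_ringOfSetsType (@lebesgue_measure R)).
move=> alpha Fplus_eq_Fminus alpha01 alpha_irr.
exact: Flim_continuous (Fplus_eq_Fminus alpha01 alpha_irr).
Qed.
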